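(* Let $h>0$ and let $(\tau,\mu):\mathbb R\to\mathbb R^2$ be any solution of the system $\tau'=1+K(\tau,\mu)\mu$, $\mu'=-K(\tau,\mu)\tau$. Then $\tau$ has exactly one zero $s_0$, with $\tau<0$ on $(-\infty,s_0)$ and $\tau>0$ on $(s_0,+\infty)$. Consequently $r^2=\tau^2+\mu^2$ attains a global minimum (at $s_0$, its only critical point) and $r^2(s)\to+\infty$ as $s\to\pm\infty$.
   Context: Fix $h>0$. For $(\tau,\mu)\in\mathbb R^2$ put $r^2=\tau^2+\mu^2$ and define $K:\mathbb R^2\to\mathbb R$ by $$K(\tau,\mu)=\frac{2\big(\tau^2+h^2(1+\mu^2)\big)\tau+(h^2-1)(1+\mu^2)\mu}{(1+r^2)(h^2+r^2)}.$$ Consider the autonomous ODE system $\tau'=1+K(\tau,\mu)\mu$, $\mu'=-K(\tau,\mu)\tau$ for functions $s\mapsto(\tau(s),\mu(s))$; all its solutions are defined on $\mathbb R$. *)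

From Stdlib Require Import Reals.
Open Scope R_scope.

Definition K (h tau mu : R) : R :=
  let r2 := tau ^ 2 + mu ^ 2 in
  (2 * (tau ^ 2 + h ^ 2 * (1 + mu ^ 2)) * tau + (h ^ 2 - 1) * (1 + mu ^ 2) * mu)
  / ((1 + r2) * (h ^ 2 + r2)).

Definition is_solution (h : R) (tau mu : R -> R) : Prop :=
  forall s : R,
    derivable_pt_lim tau s (1 + K h (tau s) (mu s) * mu s) /\
    derivable_pt_lim mu s (- (K h (tau s) (mu s) * tau s)).

From Stdlib Require Import Reals Lra Psatz Classical.
Open Scope R_scope.

(* On the strip [|tau| <= d], with [d = h^2 / (2 (1 + h^2))], one has [tau' >= d / 4 > 0],
   so [tau] can cross a level of the strip only upwards: once [tau >= k] with [|k| <= d],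
   [tau > k] forever after.  Since [(tau^2 + mu^2)' = 2 tau] and [tau^2 + mu^2 >= 0], [tau]
   cannot stay below [-d] forever; it therefore crosses the strip and stays above [d],
   and then [tau^2 + mu^2] grows at least linearly.  As [K] is odd, the system is
   invariant under [(s, tau, mu) |-> (-s, -tau, -mu)], which gives the symmetric
   statements at [-oo]. *)

Lemma continuity_pt_pos_near f x :
  continuity_pt f x -> 0 < f x ->
  exists eta, 0 < eta /\ forall u, Rabs (u - x) < eta -> 0 < f u.
Proof.
  intros Hc Hpos. destruct (Hc (f x) Hpos) as [eta [Heta Hnear]].
  exists eta. split; [lra|]. intros u Hu.
  destruct (Req_dec u x) as [->|Hux]; [exact Hpos|].
  assert (Hdist : R_dist (f u) (f x) < f x).
  { apply Hnear. split; [split; [exact I | congruence] | exact Hu]. }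
  unfold R_dist in Hdist. apply Rabs_def2 in Hdist. lra.
Qed.

Lemma derivable_pt_lim_pos_increasing_near f x l :
  derivable_pt_lim f x l -> 0 < l ->
  exists eta, 0 < eta /\ (forall u, x - eta < u < x -> f u < f x)
                      /\ (forall u, x < u < x + eta -> f x < f u).
Proof.
  intros Hd Hl. destruct (Hd l Hl) as [eta Hq].
  assert (Hslope : forall u, u <> x -> Rabs (u - x) < eta -> 0 < (f u - f x) / (u - x)).
  { intros u Hux Hu. specialize (Hq (u - x)).
    replace (x + (u - x)) with u in Hq by ring.
    assert (Hlt : Rabs ((f u - f x) / (u - x) - l) < l) by (apply Hq; lra).
    apply Rabs_def2 in Hlt. lra. }
  assert (Hdiff : forall u, u <> x -> f u - f x = (f u - f x) / (u - x) * (u - x))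
    by (intros u Hux; field; lra).
  exists eta. split; [apply cond_pos|]. split; intros u Hu.
  - assert (0 < (f u - f x) / (u - x)) by (apply Hslope; [lra | rewrite Rabs_left; lra]).
    specialize (Hdiff u ltac:(lra)). nra.
  - assert (0 < (f u - f x) / (u - x)) by (apply Hslope; [lra | rewrite Rabs_right; lra]).
    specialize (Hdiff u ltac:(lra)). nra.
Qed.

Lemma pos_right_near f c l :
  derivable_pt_lim f c l -> 0 <= f c -> (f c = 0 -> 0 < l) ->
  exists eta, 0 < eta /\ forall u, c < u < c + eta -> 0 < f u.
Proof.
  intros Hd Hc Hz. destruct (Req_dec (f c) 0) as [Hzero | Hnz].
  - destruct (derivable_pt_lim_pos_increasing_near f c l Hd (Hz Hzero))
      as [eta [Heta [_ Hr]]].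
    exists eta. split; [exact Heta|]. intros u Hu. specialize (Hr u Hu). lra.
  - assert (Hcont : continuity_pt f c) by (apply derivable_continuous_pt; exists l; exact Hd).
    destruct (continuity_pt_pos_near f c Hcont ltac:(lra)) as [eta [Heta Hn]].
    exists eta. split; [exact Heta|]. intros u Hu. apply Hn. rewrite Rabs_right; lra.
Qed.

Lemma pos_of_pos_on_left f c l a :
  a < c -> derivable_pt_lim f c l -> (f c = 0 -> 0 < l) ->
  (forall u, a < u < c -> 0 < f u) -> 0 < f c.
Proof.
  intros Hac Hd Hz Hleft.
  set (u := fun eta => c - Rmin eta (c - a) / 2).
  assert (Hu : forall eta, 0 < eta -> a < u eta < c /\ c - eta < u eta).
  { intros eta Heta. pose proof (Rmin_l eta (c - a)). pose proof (Rmin_r eta (c - a)).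
    pose proof (Rmin_pos eta (c - a) Heta ltac:(lra)).
    unfold u. lra. }
  destruct (Rtotal_order (f c) 0) as [Hneg | [Hzero | Hpos]]; [exfalso | exfalso | exact Hpos].
  - assert (Hcont : continuity_pt (fun t => - f t) c).
    { apply continuity_pt_opp, derivable_continuous_pt. exists l. exact Hd. }
    destruct (continuity_pt_pos_near (fun t => - f t) c Hcont ltac:(lra)) as [eta [Heta Hn]].
    destruct (Hu eta Heta).
    assert (0 < - f (u eta)) by (apply Hn; rewrite Rabs_left; lra).
    specialize (Hleft (u eta) ltac:(lra)). lra.
  - destruct (derivable_pt_lim_pos_increasing_near f c l Hd (Hz Hzero))
      as [eta [Heta [Hl _]]].
    destruct (Hu eta Heta). specialize (Hl (u eta) ltac:(lra)).
    specialize (Hleft (u eta) ltac:(lra)). lra.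
Qed.

(* Sup argument: [c], the largest point with [f > 0] on [(a, c]], must be [b]. *)
Lemma pos_of_pos_deriv_at_zeros f f' a b :
  a < b -> (forall x, a <= x <= b -> derivable_pt_lim f x (f' x)) ->
  (forall x, a <= x <= b -> f x = 0 -> 0 < f' x) -> 0 <= f a -> 0 < f b.
Proof.
  intros Hab Hd Hz Ha.
  set (E := fun t => a <= t <= b /\ forall u, a < u <= t -> 0 < f u).
  assert (HE : bound E) by (exists b; intros t [Ht _]; lra).
  assert (Ea : E a) by (split; [lra | intros; lra]).
  destruct (completeness E HE (ex_intro _ a Ea)) as [c [Hub Hlub]].
  assert (Hac : a <= c) by (apply Hub, Ea).
  assert (Hcb : c <= b) by (apply Hlub; intros t [Ht _]; lra).
  assert (Hinside : forall u, a < u < c -> 0 < f u).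
  { intros u Hu. apply NNPP. intro Hn. assert (c <= u); [|lra].
    apply Hlub. intros t [_ Ht]. apply Rnot_lt_le. intro Htu. apply Hn, Ht. lra. }
  assert (Hleft : a < c -> 0 < f c)
    by (intro Hac'; apply (pos_of_pos_on_left f c (f' c) a); auto; apply Hd; lra).
  assert (Hc_nonneg : 0 <= f c).
  { destruct (Req_dec c a) as [-> | Hca]; [exact Ha|]. apply Rlt_le, Hleft. lra. }
  destruct (pos_right_near f c (f' c) (Hd c ltac:(lra)) Hc_nonneg (Hz c ltac:(lra)))
    as [eta [Heta Hright]].
  assert (Hcb' : c = b).
  { apply NNPP. intro Hne.
    pose proof (Rmin_l (c + eta / 2) b). pose proof (Rmin_r (c + eta / 2) b).
    set (t := Rmin (c + eta / 2) b) in *.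
    assert (c < t) by (apply Rmin_glb_lt; lra).
    assert (t <= c); [|lra].
    apply Hub. split; [split; lra|]. intros u Hu.
    destruct (Rtotal_order u c) as [Huc | [-> | Huc]].
    - apply Hinside. lra.
    - apply Hleft. lra.
    - apply Hright. lra. }
  subst c. apply Hleft. exact Hab.
Qed.

Lemma min_of_deriv_sign_change g g' s0 :
  (forall s, derivable_pt_lim g s (g' s)) ->
  (forall s, s < s0 -> g' s < 0) -> (forall s, s0 < s -> 0 < g' s) ->
  forall s, g s0 <= g s.
Proof.
  intros Hd Hneg Hpos s.
  destruct (Rtotal_order s s0) as [Hlt | [-> | Hgt]]; [| lra |].
  - destruct (MVT_cor2 g g' s s0 Hlt (fun x _ => Hd x)) as [xi [Hmvt Hxi]].
    assert (g' xi < 0) by (apply Hneg; lra). nra.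
  - destruct (MVT_cor2 g g' s0 s Hgt (fun x _ => Hd x)) as [xi [Hmvt Hxi]].
    assert (0 < g' xi) by (apply Hpos; lra). nra.
Qed.

Definition strip (h : R) : R := h ^ 2 / (2 * (1 + h ^ 2)).

Lemma strip_pos h : 0 < h -> 0 < strip h.
Proof. intros Hh. unfold strip. apply Rdiv_lt_0_compat; nra. Qed.

(* With [a = 1 + m^2], the numerator of [1 + K m] is at least [3/8 h^2 a^2] on the strip,
   the denominator at most [2 (1 + h^2) a^2]. *)
Lemma speed_lower_bound_on_strip h t m :
  0 < h -> - strip h <= t <= strip h -> strip h / 4 <= 1 + K h t m * m.
Proof.
  intros Hh Ht. pose proof (strip_pos h Hh) as Hd0.
  assert (Hd : strip h * (2 * (1 + h ^ 2)) = h ^ 2) by (unfold strip; field; nra).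
  set (d := strip h) in *. set (a := 1 + m ^ 2).
  assert (Hd1 : d <= 1 / 2) by nra.
  assert (Hd2 : 2 * d <= h ^ 2) by nra.
  assert (Htm : - (d * a) <= 2 * t * m).
  { assert (0 <= a - 2 * m) by (unfold a; pose proof (pow2_ge_0 (m - 1)); nra).
    assert (0 <= a + 2 * m) by (unfold a; pose proof (pow2_ge_0 (m + 1)); nra).
    assert (0 <= (d - t) * (a - 2 * m)) by (apply Rmult_le_pos; lra).
    assert (0 <= (d + t) * (a + 2 * m)) by (apply Rmult_le_pos; lra).
    nra. }
  set (N := h ^ 2 * a ^ 2 + t ^ 2 * (1 + h ^ 2 + 2 * m ^ 2) + t ^ 4
            + 2 * t * m * (t ^ 2 + h ^ 2 * a)).
  set (D := (1 + (t ^ 2 + m ^ 2)) * (h ^ 2 + (t ^ 2 + m ^ 2))).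
  assert (HD : 0 < D) by (unfold D; nra).
  assert (HK : 1 + K h t m * m = N / D).
  { unfold K, N, D, a. field. split; apply Rgt_not_eq; nra. }
  assert (HN : 3 / 8 * h ^ 2 * a ^ 2 <= N).
  { assert (Ha : 1 <= a) by (unfold a; nra).
    assert (Ht2 : t ^ 2 <= d ^ 2) by nra.
    assert (Hcube : d * a * t ^ 2 <= h ^ 2 / 8 * a ^ 2).
    { assert (d * t ^ 2 <= h ^ 2 / 8) by nra. nra. }
    assert (- (d * a) * (t ^ 2 + h ^ 2 * a) <= 2 * t * m * (t ^ 2 + h ^ 2 * a))
      by (apply Rmult_le_compat_r; nra).
    unfold N. nra. }
  assert (HDa : D <= 2 * (1 + h ^ 2) * a ^ 2).
  { unfold D. assert (1 + (t ^ 2 + m ^ 2) <= 2 * a) by (unfold a; nra).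
    assert (h ^ 2 + (t ^ 2 + m ^ 2) <= (1 + h ^ 2) * a) by (unfold a; nra).
    nra. }
  rewrite HK. apply (Rmult_le_reg_r D); [exact HD|].
  replace (N / D * D) with N by (field; lra). nra.
Qed.

Section Solution.
Variables (h : R) (tau mu : R -> R).
Hypothesis h_pos : 0 < h.
Hypothesis tau_mu_sol : is_solution h tau mu.

Let r2 (s : R) : R := tau s ^ 2 + mu s ^ 2.

Lemma r2_deriv s : derivable_pt_lim r2 s (2 * tau s).
Proof.
  destruct (tau_mu_sol s) as [Htau Hmu].
  pose proof (derivable_pt_lim_comp tau (fun x => x ^ 2) s _ _ Htau
                (derivable_pt_lim_pow (tau s) 2)) as Dtau.
  pose proof (derivable_pt_lim_comp mu (fun x => x ^ 2) s _ _ Hmu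
                (derivable_pt_lim_pow (mu s) 2)) as Dmu.
  replace (2 * tau s) with (INR 2 * tau s ^ Nat.pred 2 * (1 + K h (tau s) (mu s) * mu s)
                           + INR 2 * mu s ^ Nat.pred 2 * - (K h (tau s) (mu s) * tau s))
    by (simpl; ring).
  exact (derivable_pt_lim_plus _ _ s _ _ Dtau Dmu).
Qed.

Lemma tau_stays_above k a b :
  - strip h <= k <= strip h -> k <= tau a -> a < b -> k < tau b.
Proof.
  intros Hk Ha Hab. pose proof (strip_pos h h_pos).
  assert (0 < tau b - k); [|lra].
  apply (pos_of_pos_deriv_at_zeros (fun t => tau t - k)
           (fun t => 1 + K h (tau t) (mu t) * mu t) a b Hab); [| | lra].
  - intros x _. replace (1 + K h (tau x) (mu x) * mu x)
      with (1 + K h (tau x) (mu x) * mu x - 0) by ring.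
    apply derivable_pt_lim_minus; [apply tau_mu_sol | apply derivable_pt_lim_const].
  - intros x _ Hx. replace (tau x) with k by lra.
    pose proof (speed_lower_bound_on_strip h k (mu x) h_pos Hk). lra.
Qed.

(* Crossing the strip, of width [2 strip h], at speed at least [strip h / 4] takes
   less than 12 time units. *)
Lemma tau_crosses_strip s0 :
  - strip h <= tau s0 -> exists s, s0 < s /\ strip h < tau s.
Proof.
  intros H0. pose proof (strip_pos h h_pos) as Hd.
  exists (s0 + 12). split; [lra|]. apply Rnot_le_lt. intro Hend.
  assert (Hin : forall x, s0 < x < s0 + 12 -> - strip h <= tau x <= strip h).
  { intros x Hx. split.
    - apply Rlt_le, (tau_stays_above (- strip h) s0 x); lra.
    - apply Rnot_lt_le. intro Hx'.
      pose proof (tau_stays_above (strip h) x (s0 + 12) ltac:(lra) ltac:(lra) ltac:(lra)).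
      lra. }
  destruct (MVT_cor2 tau (fun t => 1 + K h (tau t) (mu t) * mu t) s0 (s0 + 12)
              ltac:(lra) (fun x _ => proj1 (tau_mu_sol x))) as [xi [Hmvt Hxi]].
  pose proof (speed_lower_bound_on_strip h (tau xi) (mu xi) h_pos (Hin xi Hxi)).
  lra.
Qed.

Lemma tau_not_below_strip : exists s, - strip h <= tau s.
Proof.
  apply NNPP. intro Hbelow.
  assert (Hneg : forall s, tau s < - strip h)
    by (intro s; apply Rnot_le_lt; intro Hs; apply Hbelow; exists s; exact Hs).
  pose proof (strip_pos h h_pos) as Hd.
  set (T := r2 0 / (2 * strip h) + 1).
  assert (HT : 2 * strip h * T = r2 0 + 2 * strip h) by (unfold T; field; lra).
  assert (Hr0 : 0 <= r2 0) by (unfold r2; nra).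
  assert (T_pos : 0 < T) by nra.
  destruct (MVT_cor2 r2 (fun s => 2 * tau s) 0 T T_pos (fun x _ => r2_deriv x))
    as [xi [Hmvt _]].
  assert (0 <= r2 T) by (unfold r2; nra).
  specialize (Hneg xi). nra.
Qed.

Lemma tau_eventually_above_strip : exists a, forall s, a < s -> strip h < tau s.
Proof.
  destruct tau_not_below_strip as [s0 H0].
  destruct (tau_crosses_strip s0 H0) as [a [_ Ha]].
  pose proof (strip_pos h h_pos).
  exists a. intros s Hs. apply (tau_stays_above (strip h) a); lra.
Qed.

Lemma r2_unbounded_forward (M : R) : exists N, forall s, N < s -> M < r2 s.
Proof.
  destruct tau_eventually_above_strip as [a Ha].
  pose proof (strip_pos h h_pos) as Hd.
  set (q := Rabs M / (2 * strip h)).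
  assert (Hq : 2 * strip h * q = Rabs M) by (unfold q; field; lra).
  assert (q_nonneg : 0 <= q) by (pose proof (Rabs_pos M); nra).
  exists (a + q). intros s Hs.
  destruct (MVT_cor2 r2 (fun t => 2 * tau t) a s ltac:(lra) (fun x _ => r2_deriv x))
    as [xi [Hmvt Hxi]].
  assert (strip h < tau xi) by (apply Ha; lra).
  assert (0 <= r2 a) by (unfold r2; nra).
  assert (Rabs M < 2 * strip h * (s - a)) by nra.
  pose proof (Rle_abs M). nra.
Qed.

Lemma tau_somewhere_pos : exists s, 0 < tau s.
Proof.
  destruct tau_eventually_above_strip as [a Ha].
  exists (a + 1). pose proof (strip_pos h h_pos). specialize (Ha (a + 1)). lra.
Qed.

Lemma tau_pos_after_zero s0 s : tau s0 = 0 -> s0 < s -> 0 < tau s.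
Proof.
  intros H0 Hs. pose proof (strip_pos h h_pos).
  apply (tau_stays_above 0 s0); lra.
Qed.

End Solution.

Lemma K_opp h t m : 0 < h -> K h (- t) (- m) = - K h t m.
Proof. intros Hh. unfold K. field. split; apply Rgt_not_eq; nra. Qed.

Lemma is_solution_reverse h tau mu :
  0 < h -> is_solution h tau mu ->
  is_solution h (fun s => - tau (- s)) (fun s => - mu (- s)).
Proof.
  intros Hh Hsol s. destruct (Hsol (- s)) as [Htau Hmu].
  rewrite K_opp by exact Hh. split.
  - apply (derivable_pt_lim_opp_fwd (fun s => tau (- s))), (derivable_pt_lim_mirr_fwd tau).
    replace (- - (1 + - K h (tau (- s)) (mu (- s)) * - mu (- s)))
      with (1 + K h (tau (- s)) (mu (- s)) * mu (- s)) by ring.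
    exact Htau.
  - apply (derivable_pt_lim_opp_fwd (fun s => mu (- s))), (derivable_pt_lim_mirr_fwd mu).
    replace (- - - (- K h (tau (- s)) (mu (- s)) * - tau (- s)))
      with (- (K h (tau (- s)) (mu (- s)) * tau (- s))) by ring.
    exact Hmu.
Qed.

Lemma tau_sign_change h tau mu :
  0 < h -> is_solution h tau mu ->
  exists s0, tau s0 = 0 /\ (forall s, s < s0 -> tau s < 0) /\ (forall s, s0 < s -> 0 < tau s).
Proof.
  intros Hh Hsol. pose proof (is_solution_reverse h tau mu Hh Hsol) as Hrev.
  assert (Hzero : exists s0, tau s0 = 0).
  { destruct (tau_somewhere_pos h tau mu Hh Hsol) as [p Hp].
    destruct (tau_somewhere_pos h _ _ Hh Hrev) as [n' Hn'].
    set (n := - n'). assert (Hn : tau n < 0) by (cbv beta in Hn'; unfold n; lra).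
    destruct (Rtotal_order n p) as [Hnp | [Hnp | Hnp]].
    - assert (Hc : continuity tau).
      { intro x. apply derivable_continuous_pt. exists (1 + K h (tau x) (mu x) * mu x).
        apply Hsol. }
      destruct (IVT tau n p Hc Hnp ltac:(lra) Hp) as [z [_ Hz]]. exists z. exact Hz.
    - rewrite Hnp in Hn. lra.
    - pose proof (strip_pos h Hh).
      pose proof (tau_stays_above h tau mu Hh Hsol 0 p n ltac:(lra) ltac:(lra) Hnp). lra. }
  destruct Hzero as [s0 H0]. exists s0. split; [exact H0|]. split.
  - intros s Hs.
    assert (0 < - tau (- - s)); [|rewrite Ropp_involutive in *; lra].
    apply (tau_pos_after_zero h _ _ Hh Hrev (- s0)); [rewrite Ropp_involutive, H0; lra | lra].
  - intros s. apply (tau_pos_after_zero h tau mu Hh Hsol s0 s H0).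
Qed.

Lemma r2_unbounded_backward h tau mu (M : R) :
  0 < h -> is_solution h tau mu ->
  exists N, forall s, s < N -> M < tau s ^ 2 + mu s ^ 2.
Proof.
  intros Hh Hsol.
  destruct (r2_unbounded_forward h _ _ Hh (is_solution_reverse h tau mu Hh Hsol) M)
    as [N HN].
  exists (- N). intros s Hs. specialize (HN (- s) ltac:(lra)).
  rewrite Ropp_involutive in HN. nra.
Qed.

Theorem claim3 (h : R) (tau mu : R -> R) :
  0 < h ->
  is_solution h tau mu ->
  exists s0 : R,
    tau s0 = 0 /\
    (forall s, tau s = 0 -> s = s0) /\
    (forall s, s < s0 -> tau s < 0) /\
    (forall s, s0 < s -> 0 < tau s) /\
    (forall s, (tau s0) ^ 2 + (mu s0) ^ 2 <= (tau s) ^ 2 + (mu s) ^ 2) /\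
    derivable_pt_lim (fun t => (tau t) ^ 2 + (mu t) ^ 2) s0 0 /\
    (forall s, derivable_pt_lim (fun t => (tau t) ^ 2 + (mu t) ^ 2) s 0 -> s = s0) /\
    (forall M : R, exists N : R, forall s, N < s -> M < (tau s) ^ 2 + (mu s) ^ 2) /\
    (forall M : R, exists N : R, forall s, s < N -> M < (tau s) ^ 2 + (mu s) ^ 2).
Proof.
  intros Hh Hsol.
  destruct (tau_sign_change h tau mu Hh Hsol) as [s0 [H0 [Hneg Hpos]]].
  assert (Hunique : forall s, tau s = 0 -> s = s0).
  { intros s Hs. destruct (Rtotal_order s s0) as [Hlt | [Heq | Hgt]].
    - specialize (Hneg s Hlt). lra.
    - exact Heq.
    - specialize (Hpos s Hgt). lra. }
  exists s0. repeat split; auto.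
  - apply (min_of_deriv_sign_change _ (fun s => 2 * tau s) s0 (r2_deriv h tau mu Hsol));
      intros s Hs; [specialize (Hneg s Hs) | specialize (Hpos s Hs)]; lra.
  - replace 0 with (2 * tau s0) by (rewrite H0; ring). apply (r2_deriv h tau mu Hsol).
  - intros s Hs. apply Hunique.
    pose proof (uniqueness_limite _ _ _ _ Hs (r2_deriv h tau mu Hsol s)). lra.
  - apply (r2_unbounded_forward h tau mu Hh Hsol).
  - intros M. apply (r2_unbounded_backward h tau mu M Hh Hsol).
Qed.
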